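(* Let $\Sigma'$ be a set of FDs over $R$ (each with a single right-hand-side attribute), $I'$ an instance, $C\subseteq I'$ a set of tuples, $t$ a tuple over $R$, and $F\subseteq R$ a nonempty set of attributes. Run the procedure Find_Assignment$(t,F,I',\Sigma',C)$ described in the context. Then the procedure terminates and: (Soundness) if it returns a tuple $t_c$, then $t_c[B]=t[B]$ for every $B\in F$, and for every $t'\in I'\setminus C$ and every FD $X\rightarrow A\in\Sigma'$ it is not the case that $t_c[X]=t'[X]$ and $t_c[A]\neq t'[A]$; (Completeness) if there exists a tuple $t_g$ (cells holding constants or variables) with $t_g[B]=t[B]$ for all $B\in F$ such that for every $t'\in I'\setminus C$ the pair $(t_g,t')$ violates no FD of $\Sigma'$, then the procedure does not return $\phi$.
   Context: Instances are V-instances: each cell $t[A]$ holds a constant of $Dom(A)$ or a variable $v^A_i$; two cells are equal iff they hold the same constant or the same variable. For a set of attributes $X$, $t[X]=t'[X]$ means equality on every attribute of $X$. A pair of tuples $(t_1,t_2)$ violates $X\rightarrow A$ iff $t_1[X]=t_2[X]$ and $t_1[A]\neq t_2[A]$. Procedure Find_Assignment$(t,F,I',\Sigma',C)$: (1) Set $Fixed:=F$ and build a tuple $t_c$ with $t_c[B]=t[B]$ for $B\in Fixed$ and $t_c[B]$ equal to a new variable (not occurring anywhere else) for $B\notin Fixed$. (2) While there exist $t'\in I'\setminus C$ and an FD $X\rightarrow A\in\Sigma'$ with $t_c[X]=t'[X]$ and $t_c[A]\neq t'[A]$: if $A\in Fixed$, return $\phi$ (no assignment); otherwise set $t_c[A]:=t'[A]$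 and add $A$ to $Fixed$. (3) When no such $t'$ and FD exist, return $t_c$. *)

From HB Require Import structures.
From mathcomp Require Import all_boot.
From Stdlib Require List.
Set Implicit Arguments.
Unset Strict Implicit.
Unset Printing Implicit Defensive.

Section VInstances.
Variables (Attr : finType) (K : Type).

(* A cell of a V-instance: a constant, or a variable v^A_i (the attribute A
   is the column in which the cell sits, so only the index i is stored). *)
Inductive cell : Type := Cst of K | Var of nat.

Definition vtuple := Attr -> cell.

Record fd := FD { fd_lhs : {set Attr}; fd_rhs : Attr }.

Definition agree (X : {set Attr}) (t t' : vtuple) : Prop :=
  forall B, B \in X -> t B = t' B.

Definition viol (t t' : vtuple) (f : fd) : Prop :=
  agree (fd_lhs f) t t' /\ t (fd_rhs f) <> t' (fd_rhs f).

Definition in_diff (I' : seq vtuple) (C : vtuple -> Prop) (t' : vtuple) : Prop :=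
  List.In t' I' /\ ~ C t'.

Definition upd (tc : vtuple) (A : Attr) (c : cell) : vtuple :=
  fun B => if B == A then c else tc B.

(* States of the while loop: (Fixed, t_c). *)
Definition fa_state := ({set Attr} * vtuple)%type.

Definition fa_step (I' : seq vtuple) (Sigma' : seq fd) (C : vtuple -> Prop)
  (s s' : fa_state) : Prop :=
  exists t' f, in_diff I' C t' /\ List.In f Sigma' /\ viol s.2 t' f /\
    fd_rhs f \notin s.1 /\
    s' = (fd_rhs f |: s.1, upd s.2 (fd_rhs f) (t' (fd_rhs f))).

(* Big-step semantics of the loop (with arbitrary choice of the witness
   t', X -> A at each iteration): None stands for phi, Some tc for a
   returned tuple. *)
Inductive fa_run (I' : seq vtuple) (Sigma' : seq fd) (C : vtuple -> Prop) :
  fa_state -> option vtuple -> Prop :=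
| fa_fail (Fixed : {set Attr}) (tc : vtuple) t' f :
    in_diff I' C t' -> List.In f Sigma' -> viol tc t' f ->
    fd_rhs f \in Fixed -> fa_run I' Sigma' C ((Fixed, tc) : fa_state) None
| fa_cont s s' r :
    fa_step I' Sigma' C s s' -> fa_run I' Sigma' C s' r -> fa_run I' Sigma' C s r
| fa_done (Fixed : {set Attr}) (tc : vtuple) :
    (forall t' f, in_diff I' C t' -> List.In f Sigma' -> ~ viol tc t' f) ->
    fa_run I' Sigma' C ((Fixed, tc) : fa_state) (Some tc).

Definition fa_init (I' : seq vtuple) (t : vtuple) (F : {set Attr}) (tc0 : vtuple) : Prop :=
  (forall B, B \in F -> tc0 B = t B) /\
  (forall B, B \notin F -> exists n, tc0 B = Var n /\
      (forall t'' B', List.In t'' I' -> t'' B' <> Var n) /\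
      (forall B', t B' <> Var n) /\
      (forall B', B' != B -> tc0 B' <> Var n)).

Definition find_assignment (t : vtuple) (F : {set Attr}) (I' : seq vtuple)
  (Sigma' : seq fd) (C : vtuple -> Prop) (tc0 : vtuple) (r : option vtuple) : Prop :=
  fa_run I' Sigma' C ((F, tc0) : fa_state) r.

End VInstances.
Arguments Cst {K}. Arguments Var {K}.

(* The proof follows the loop of the procedure through an invariant on its
   state (Fixed, t_c): F is contained in Fixed, t_c copies t on F, and t_c
   still carries its initial fresh variables outside Fixed.  Because those
   variables occur in no tuple of I', the tuple t_c can only agree with a
   tuple t' of I' on attributes of Fixed (lemma [agree_within_fixed]).

   - Termination: every iteration adds a new attribute to Fixed, so the
     number of non-fixed attributes strictly decreases; the loop relation is
     therefore well founded, and well-founded induction produces a run.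
   - Soundness: the invariant survives every iteration, and a run stops
     with a returned tuple only when no violation is left.
   - Completeness: if t_g is a violation-free tuple agreeing with t on F,
     then t_c agrees with t_g on Fixed throughout the run.  A violation
     (t_c, t') on X -> A has X inside Fixed, hence is also a violation of
     (t_g, t') unless t'[A] = t_g[A]; so A cannot already be fixed (no phi),
     and the value copied into t_c[A] is exactly t_g[A]. *)

From HB Require Import structures.
From mathcomp Require Import all_boot.
From Stdlib Require List.
From Stdlib Require Import Classical.
From Stdlib Require Wf_nat Inclusion.

Set Implicit Arguments.
Unset Strict Implicit.
Unset Printing Implicit Defensive.

Section FindAssignment.
Variables (Attr : finType) (K : Type).
Variables (Sigma' : seq (fd Attr)) (I' : seq (vtuple Attr K))
  (C : vtuple Attr K -> Prop) (t : vtuple Attr K) (F : {set Attr})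
  (tc0 : vtuple Attr K).

Notation state := (fa_state Attr K).
Notation step := (fa_step I' Sigma' C).
Notation run := (fa_run I' Sigma' C).

Definition admissible (tc : vtuple Attr K) : Prop :=
  (forall B, B \in F -> tc B = t B) /\
  (forall t' f, in_diff I' C t' -> List.In f Sigma' -> ~ viol tc t' f).

Definition fa_inv (s : state) : Prop :=
  [/\ F \subset s.1, (forall B, B \in F -> s.2 B = t B)
    & (forall B, B \notin s.1 -> s.2 B = tc0 B)].

Lemma fa_inv_init : fa_init I' t F tc0 -> fa_inv (F, tc0).
Proof. by case=> tc0F _; split. Qed.

(* One loop iteration fixes one more attribute and changes t_c only there. *)
Lemma fa_inv_step s s' : step s s' -> fa_inv s -> fa_inv s'.
Proof.
move=> [t' [f [_ [_ [_ [notfixed ->]]]]]] [sub_F onF offFixed] /=; split.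
- exact: subset_trans sub_F (subsetUr _ _).
- move=> B BF /=; rewrite /upd.
  case: (B =P fd_rhs f) => [eqBA | _]; last exact: onF.
  by move: notfixed; rewrite -eqBA (subsetP sub_F _ BF).
- move=> B /=; rewrite in_setU1 negb_or => /andP [/negbTE neBA notfixedB].
  by rewrite /upd neBA offFixed.
Qed.

(* Fresh variables never match a tuple of I', so t_c agrees with a tuple of
   I' only on fixed attributes. *)
Lemma agree_within_fixed s t' X : fa_init I' t F tc0 -> fa_inv s ->
  in_diff I' C t' -> agree X s.2 t' -> X \subset s.1.
Proof.
move=> [_ fresh] [sub_F _ offFixed] [t'I' _] agreeX; apply/subsetP => B BX.
apply: contraT => notfixedB.
have [n [tc0B [notinI' _]]] := fresh B (contra (subsetP sub_F B) notfixedB).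
by exfalso; apply: (notinI' t' B t'I'); rewrite -(agreeX B BX) offFixed.
Qed.

Lemma step_decreases s s' : step s s' -> #|~: s'.1| < #|~: s.1|.
Proof.
move=> [t' [f [_ [_ [_ [notfixed ->]]]]]] /=; rewrite setCU.
apply: proper_card; rewrite properE subsetIr /=; apply/subsetPn.
by exists (fd_rhs f); rewrite !inE ?eqxx.
Qed.

Lemma step_acc s : Acc (fun s' s => step s s') s.
Proof.
apply: (Inclusion.Acc_incl _ _ (Wf_nat.ltof state (fun s => #|~: s.1|))).
- by move=> s' s'' /step_decreases /ltP.
- exact: Wf_nat.well_founded_ltof.
Qed.

Lemma run_exists s : Acc (fun s' s => step s s') s -> exists r, run s r.
Proof.
elim=> -[Fixed tc] _ IH.
case: (classic (exists t' f,
  in_diff I' C t' /\ List.In f Sigma' /\ viol tc t' f)) => [|noviol].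
- move=> [t' [f [t'I' [fS vio]]]].
  case: (boolP (fd_rhs f \in Fixed)) => [fixed | notfixed].
  + by exists None; exact: fa_fail t'I' fS vio fixed.
  + have st : step (Fixed, tc)
        (fd_rhs f |: Fixed, upd tc (fd_rhs f) (t' (fd_rhs f))).
      by exists t', f.
    by have [r runr] := IH _ st; exists r; exact: fa_cont st runr.
- exists (Some tc); apply: fa_done => t' f t'I' fS vio.
  by apply: noviol; exists t', f.
Qed.

Lemma run_sound s r : run s r -> fa_inv s ->
  forall tc, r = Some tc -> admissible tc.
Proof.
elim=> {s r} [Fixed tc t' f _ _ _ _ _ _ //
  | s s' r st _ IH inv | Fixed tc noviol [_ onF _] _ [<-]].
- exact: IH (fa_inv_step st inv).
- by split.
Qed.

Lemma viol_transfer tg s t' f : fa_init I' t F tc0 -> fa_inv s ->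
  (forall B, B \in s.1 -> s.2 B = tg B) -> in_diff I' C t' ->
  agree (fd_lhs f) s.2 t' -> agree (fd_lhs f) tg t'.
Proof.
move=> init inv onFixed t'I' agreeX B BX.
have sub := agree_within_fixed init inv t'I' agreeX.
by rewrite -onFixed ?(subsetP sub) ?agreeX.
Qed.

Lemma run_complete tg s r : fa_init I' t F tc0 -> run s r ->
  (forall t' f, in_diff I' C t' -> List.In f Sigma' -> ~ viol tg t' f) ->
  fa_inv s -> (forall B, B \in s.1 -> s.2 B = tg B) -> r <> None.
Proof.
move=> init; elim=> {s r} [Fixed tc t' f t'I' fS [agreeX neA] fixed | |//].
- move=> tg_ok inv onFixed _; apply: (tg_ok t' f t'I' fS); split.
  + exact: viol_transfer init inv onFixed t'I' agreeX.
  + by rewrite -(onFixed _ fixed).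
- move=> s s' r st _ IH tg_ok inv onFixed.
  apply: IH => //; first exact: fa_inv_step st inv.
  move: st => [t' [f [t'I' [fS [[agreeX neA] [_ ->]]]]]] B /=.
  rewrite in_setU1 /upd; case: eqP => [-> _ | _ /= BFixed]; last exact: onFixed.
  apply: NNPP => ne; apply: (tg_ok t' f t'I' fS); split.
  + exact: viol_transfer init inv onFixed t'I' agreeX.
  + by move=> eqA; apply: ne; rewrite eqA.
Qed.

End FindAssignment.

Theorem lemma2 (Attr : finType) (K : Type)
  (Sigma' : seq (fd Attr)) (I' : seq (vtuple Attr K)) (C : vtuple Attr K -> Prop)
  (t : vtuple Attr K) (F : {set Attr}) (tc0 : vtuple Attr K) :
  F != set0 ->
  fa_init I' t F tc0 ->
  (* termination: no infinite sequence of loop iterations, and some result *)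
  (Acc (fun s' s => fa_step I' Sigma' C s s') (F, tc0) /\
   exists r, find_assignment t F I' Sigma' C tc0 r) /\
  (* soundness *)
  (forall tc, find_assignment t F I' Sigma' C tc0 (Some tc) ->
     (forall B, B \in F -> tc B = t B) /\
     (forall t' f, in_diff I' C t' -> List.In f Sigma' -> ~ viol tc t' f)) /\
  (* completeness *)
  ((exists tg : vtuple Attr K, (forall B, B \in F -> tg B = t B) /\
      (forall t' f, in_diff I' C t' -> List.In f Sigma' -> ~ viol tg t' f)) ->
   ~ find_assignment t F I' Sigma' C tc0 None).
Proof.
move=> _ init.
have inv0 := fa_inv_init init.
have acc0 := step_acc Sigma' I' C (F, tc0).
split; [split=> //; exact: run_exists acc0 | split].
- by move=> tc run_tc; apply: run_sound run_tc inv0 tc erefl.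
- move=> [tg [tgF tg_ok]] run_phi.
  have [_ tc0F _] := inv0.
  apply: (run_complete init run_phi tg_ok inv0 _ erefl) => B BF /=.
  by rewrite tgF // -(tc0F B BF).
Qed.
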